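(* Let $\sigma$ be a finite relational signature, $\mathcal{A}$ a finite $\sigma$-structure, and $\varphi=\forall x^1,\dots,x^m\,\exists \bar y\; P(x^1,\dots,x^m,\bar y)$ a sentence where $P$ is a conjunction of atomic $\sigma$-formulas. Then $\mathcal{A}\models\varphi$ if and only if there is a homomorphism of $\sigma\cup C_m$-structures from $\mathfrak{D}_\varphi$ to $\mathfrak{A}^{|A|^m}$.
   Context: $C_m=\{c_1,\dots,c_m\}$ is a set of new constant symbols; a homomorphism of $\sigma\cup C_m$-structures preserves all relations of $\sigma$ and maps the interpretation of each $c_i$ to the interpretation of $c_i$. $\mathfrak{D}_\varphi$ is the $\sigma\cup C_m$-structure whose domain is the set of variables of $\varphi$, whose relation tuples are exactly the atoms of $P$, and in which $c_i$ is interpreted by $x^i$. For a map $\lambda:\{1,\dots,m\}\to A$, $\mathfrak{A}_\lambda$ is the expansion of $\mathcal{A}$ interpreting $c_i$ by $\lambda(i)$. The ''Superprodukt'' $\mathfrak{A}^{|A|^m}$ is the direct product $\bigotimes_{\lambda\in A^{\{1,\dots,m\}}}\mathfrak{A}_\lambda$: domain $A^{A^{\{1,\dots,m\}}}$, relations holding coordinatewise, and $c_i$ interpreted by the tuple whose $\lambda$-coordinate is $\lambda(i)$. *)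

From mathcomp Require Import all_boot.
From Stdlib Require List.
Set Implicit Arguments. Unset Strict Implicit. Unset Printing Implicit Defensive.

Record structure (S : finType) (ar : S -> nat) (T : Type) := Structure {
  rel : forall s : S, (ar s).-tuple T -> Prop }.

(* A sigma ∪ C_m structure: a sigma-structure plus interpretations of the
   constants c_1..c_m (indexed by 'I_m). *)
Record cstructure (S : finType) (ar : S -> nat) (m : nat) (T : Type) := CStructure {
  cbase : structure ar T;
  cst : 'I_m -> T }.

Definition is_chom (S : finType) (ar : S -> nat) (m : nat) (T U : Type)
  (D : cstructure ar m T) (E : cstructure ar m U) (h : T -> U) : Prop :=
  (forall (s : S) (t : (ar s).-tuple T),
      rel (cbase D) t -> rel (cbase E) (map_tuple h t)) /\
  (forall i : 'I_m, h (cst D i) = cst E i).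

(* A primitive-positive-prefix sentence
     forall x^1..x^m exists y_1..y_k, P
   with P a conjunction of relational atoms.  Variables are 'I_m + 'I_k
   (inl i = x^{i+1}, inr j = y_{j+1}); P is the list of its atoms. *)
Record ae_sentence (S : finType) (ar : S -> nat) := AESentence {
  nx : nat;
  ny : nat;
  atoms : seq {s : S & (ar s).-tuple (sum 'I_nx 'I_ny)} }.

Definition sat (S : finType) (ar : S -> nat) (T : Type) (A : structure ar T)
  (phi : ae_sentence ar) : Prop :=
  forall a : 'I_(nx phi) -> T, exists b : 'I_(ny phi) -> T,
    forall at0, List.In at0 (atoms phi) ->
      rel A (map_tuple (fun v => match v with inl i => a i | inr j => b j end)
                       (projT2 at0)).

Definition canon_struct (S : finType) (ar : S -> nat) (phi : ae_sentence ar)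
  : cstructure ar (nx phi) (sum 'I_(nx phi) 'I_(ny phi)) :=
  CStructure (Structure (fun s t => List.In (existT _ s t) (atoms phi)))
             (fun i => inl i).

Definition expand (S : finType) (ar : S -> nat) (m : nat) (T : Type)
  (A : structure ar T) (lam : 'I_m -> T) : cstructure ar m T :=
  CStructure A lam.

Definition cprod (S : finType) (ar : S -> nat) (m : nat) (T I : Type)
  (F : I -> cstructure ar m T) : cstructure ar m (I -> T) :=
  CStructure
    (Structure (fun s (t : (ar s).-tuple (I -> T)) =>
       forall i : I, rel (cbase (F i)) (map_tuple (fun f => f i) t)))
    (fun c i => cst (F i) c).

Definition superprod (S : finType) (ar : S -> nat) (m : nat) (A : finType)
  (SA : structure ar A) : cstructure ar m ({ffun 'I_m -> A} -> A) :=
  cprod (fun lam : {ffun 'I_m -> A} => expand SA lam).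

From Pilot Require Import Defs.
From mathcomp Require Import all_boot.
From Stdlib Require Import FunctionalExtensionality.

(* A homomorphism into a product is the same as a family of homomorphisms into
   the factors.  Homomorphisms from [D_phi] into [A_lam] are exactly the
   witnesses [b] for the existential block of [phi] at [x := lam], so a
   homomorphism into the superproduct collects, in its [lam]-th coordinate, a
   witness for every assignment [lam] of the universal variables at once. *)

Lemma map_tuple_ext (T U : Type) n (f g : T -> U) (t : n.-tuple T) :
  f =1 g -> map_tuple f t = map_tuple g t.
Proof. by move=> eq_fg; apply: val_inj; exact: eq_map. Qed.

Lemma map_tuple_comp (T U V : Type) n (f : T -> U) (g : U -> V) (t : n.-tuple T) :
  map_tuple g (map_tuple f t) = map_tuple (g \o f) t.
Proof. by apply: val_inj; rewrite /= map_comp. Qed.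

Section Homomorphisms.

Variables (S : finType) (ar : S -> nat) (m : nat).

Lemma is_chom_cprod (T U I : Type) (D : cstructure ar m T)
    (F : I -> cstructure ar m U) (h : T -> I -> U) :
  is_chom D (cprod F) h <-> forall i, is_chom D (F i) (fun x => h x i).
Proof.
split=> [[hom_rel hom_cst] i | hom_i]; split.
- by move=> s t /hom_rel /(_ i); rewrite /= map_tuple_comp.
- by move=> c; rewrite hom_cst.
- move=> s t Dt i; rewrite /= map_tuple_comp.
  by have [hom_rel _] := hom_i i; exact: hom_rel.
- by move=> c; apply: functional_extensionality_dep => i; have [_ ->] := hom_i i.
Qed.

End Homomorphisms.

Section CanonicalStructure.

Variables (S : finType) (ar : S -> nat) (phi : ae_sentence ar).

Local Notation var := ('I_(nx phi) + 'I_(ny phi))%type.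

Definition valuation {T : Type} (a : 'I_(nx phi) -> T) (b : 'I_(ny phi) -> T)
    (v : var) : T :=
  match v with inl i => a i | inr j => b j end.

Definition atoms_hold {T : Type} (A : structure ar T) (g : var -> T) : Prop :=
  forall at0, List.In at0 (atoms phi) -> Defs.rel A (map_tuple g (projT2 at0)).

Lemma sat_atoms_hold (T : Type) (A : structure ar T) :
  sat A phi <-> forall a, exists b, atoms_hold A (valuation a b).
Proof. by []. Qed.

Lemma is_chom_canon_expand (T : Type) (A : structure ar T)
    (lam : 'I_(nx phi) -> T) (g : var -> T) :
  is_chom (canon_struct phi) (expand A lam) g <->
  (forall i, g (inl i) = lam i) /\ atoms_hold A g.
Proof.
split=> [[hom_rel hom_cst] | [g_cst g_atoms]]; split=> //.
- by case=> s t /hom_rel.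
- by move=> s t /g_atoms.
Qed.

Lemma sat_canon_chom (T : Type) (A : structure ar T) :
  sat A phi <->
  forall lam : {ffun 'I_(nx phi) -> T},
    exists g, is_chom (canon_struct phi) (expand A lam) g.
Proof.
rewrite sat_atoms_hold; split=> [sat_phi lam | hom_lam a].
- have [b b_atoms] := sat_phi lam.
  by exists (valuation lam b); apply/is_chom_canon_expand.
- have [g /is_chom_canon_expand [g_cst g_atoms]] := hom_lam (finfun a).
  exists (fun j => g (inr j)) => at0 /g_atoms.
  by congr (Defs.rel _ _); apply: map_tuple_ext => -[i|j] //=; rewrite g_cst ffunE.
Qed.

End CanonicalStructure.

Theorem mainTheorem5 (S : finType) (ar : S -> nat) (A : finType)
  (SA : structure ar A) (phi : ae_sentence ar) :
  sat SA phi <->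
  exists h : (sum 'I_(nx phi) 'I_(ny phi)) -> ({ffun 'I_(nx phi) -> A} -> A),
    is_chom (canon_struct phi) (superprod (nx phi) SA) h.
Proof.
rewrite sat_canon_chom; split=> [/fin_all_exists [g hom_g] | [h hom_h] lam].
- by exists (fun v lam => g lam v); apply/is_chom_cprod.
- by exists (fun v => h v lam); move/is_chom_cprod: hom_h; exact.
Qed.
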